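(* Let $R=\{r_{ab}\}_{N\times N}$ be the transition rate matrix of an irreducible continuous-time Markov jump process on states $\{1,\dots,N\}$: for $a\neq b$, $r_{ab}\ge 0$ is the rate of jumps from $b$ to $a$, and $r_{bb}=-\sum_{a\neq b} r_{ab}$. For a complex number $\omega$ with $\operatorname{Re}\omega>0$, let $\hat{P}(\omega)=\int_0^\infty e^{-\omega t}e^{Rt}\,\mathrm{d}t$ (the Laplace transform of the transition probability matrix). Fix distinct states $i\neq j$ and regard $R$ (hence $\hat P(\omega)$) as a function of the single off-diagonal rate $r_{ij}>0$, with all other off-diagonal rates fixed and $r_{jj}=-\sum_{a\neq j}r_{aj}$ adjusted accordingly. For $m=1,2$, let $a^{(m)}_l$ ($l=1,\dots,N$) and $b^{(m)}_{kl}$ ($k\neq l$, $(k,l)\neq(i,j)$) be coefficients not depending on $r_{ij}$ (defining observables that do not count transitions $j\to i$), and set $c^{(m)}_l=a^{(m)}_l+\sum_{k\neq l,\ (k,l)\neq(i,j)} b^{(m)}_{kl}\,r_{kl}$. Define $$\hat\chi_{ij}^{(1)(2)}(\omega)=\frac{\sum_l c^{(1)}_l\left[\hat P_{li}(\omega)-\hat P_{lj}(\omega)\right]}{\sum_l c^{(2)}_l\left[\hat P_{li}(\omega)-\hat P_{lj}(\omega)\right]}.$$ Then for $\operatorname{Re}\omega>0$, at every value of $r_{ij}$ where the denominator is nonzero, $\frac{\mathrm{d}\hat\chi_{ij}^{(1)(2)}(\omega)}{\mathrm{d}r_{ij}}=0$.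
   Context: $\hat\chi_{ij}^{(1)(2)}(\omega)$ is the ratio of the responses to $r_{ij}$ of the Laplace transforms $\hat Q_m(\omega)=\int_0^\infty e^{-\omega\tau}\langle Q_m(\tau)\rangle\,\mathrm{d}\tau$ of the observables $Q_m=\sum_l a^{(m)}_l\tau_l(\tau)+\sum_{k\neq l,(k,l)\neq(i,j)} b^{(m)}_{kl}n_{kl}(\tau)$, where $\tau_l(\tau)$ is the time spent in state $l$ up to time $\tau$ and $n_{kl}(\tau)$ the number of jumps $l\to k$ up to time $\tau$, for the process relaxing from an arbitrary fixed initial distribution under time-independent rates. *)

From Stdlib Require Import Reals Arith Relations Bool.
From Coquelicot Require Import Coquelicot.
Open Scope R_scope.

(* States are the naturals 0 .. N-1 (the paper's 1 .. N). *)

Fixpoint sumR (n : nat) (f : nat -> R) : R :=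
  match n with O => 0 | S n' => sumR n' f + f n' end.

Definition mat := nat -> nat -> R.

Definition mid : mat := fun a b => if Nat.eqb a b then 1 else 0.

Definition mmul (N : nat) (A B : mat) : mat :=
  fun a b => sumR N (fun k => A a k * B k b).

Fixpoint mpow (N : nat) (A : mat) (n : nat) : mat :=
  match n with O => mid | S n' => mmul N A (mpow N A n') end.

Definition expm (N : nat) (A : mat) (t : R) : mat :=
  fun a b => Series (fun n => mpow N A n a b * t ^ n / INR (fact n)).

(* off-diagonal rates: q a b = rate of jumps b -> a.  The rate r_ij is
   replaced by the value x, all other off-diagonal rates come from r0. *)
Definition offrate (r0 : mat) (i j : nat) (x : R) : mat :=
  fun a b => if Nat.eqb a i && Nat.eqb b j then x else r0 a b.

Definition rate_matrix (N : nat) (q : mat) : mat :=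
  fun a b => if Nat.eqb a b
             then - sumR N (fun c => if Nat.eqb c b then 0 else q c b)
             else q a b.

Definition step (N : nat) (Rm : mat) (x y : nat) : Prop :=
  (x < N)%nat /\ (y < N)%nat /\ x <> y /\ 0 < Rm y x.

Definition irreducible (N : nat) (Rm : mat) : Prop :=
  forall a b, (a < N)%nat -> (b < N)%nat -> clos_refl_trans nat (step N Rm) a b.

Definition cexp_neg (w : C) (t : R) : C :=
  (exp (- Re w * t) * cos (Im w * t), - (exp (- Re w * t) * sin (Im w * t))).

Definition Phat (N : nat) (Rm : mat) (w : C) (a b : nat) : C :=
  @RInt_gen C_R_CompleteNormedModule
           (fun t => Cmult (cexp_neg w t) (RtoC (expm N Rm t a b)))
           (at_point 0) (Rbar_locally p_infty).

Fixpoint sumC (n : nat) (f : nat -> C) : C :=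
  match n with O => RtoC 0 | S n' => Cplus (sumC n' f) (f n') end.

Definition coef (N : nat) (r0 : mat) (i j : nat) (a : nat -> R) (b : mat) (l : nat) : R :=
  a l + sumR N (fun k => if Nat.eqb k l || (Nat.eqb k i && Nat.eqb l j) then 0
                         else b k l * r0 k l).

Definition response (N : nat) (r0 : mat) (i j : nat) (a : nat -> R) (b : mat)
  (w : C) (x : R) : C :=
  sumC N (fun l => Cmult (RtoC (coef N r0 i j a b l))
     (Cminus (Phat N (rate_matrix N (offrate r0 i j x)) w l i)
             (Phat N (rate_matrix N (offrate r0 i j x)) w l j))).

Definition chi_hat (N : nat) (r0 : mat) (i j : nat) (a1 a2 : nat -> R) (b1 b2 : mat)
  (w : C) (x : R) : C :=
  Cdiv (response N r0 i j a1 b1 w x) (response N r0 i j a2 b2 w x).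

From Stdlib Require Import Reals Arith Relations Bool Lia Lra.
From Coquelicot Require Import Coquelicot.
Open Scope R_scope.

(* Raising the rate r_ij from x to y adds the rank-one matrix (y - x) (e_i - e_j) e_j^T to the
   generator R.  Since P(w) is the resolvent (w - R)^-1, the second resolvent identity gives,
   for every state l,
     P^y_li - P^y_lj = (P^x_li - P^x_lj) / (1 - (y - x) (P^x_ji - P^x_jj)),
   with a factor independent of l.  Both responses are combinations of these differences with
   coefficients independent of r_ij, so both are divided by the same factor and their ratio is
   locally constant in r_ij.  That P(w) is the resolvent for Re w > 0 rests on e^{Rt} being a
   stochastic matrix, hence bounded, and on the rule L[f'] = w L[f] - f(0). *)

Lemma sumR_ext n f g : (forall k, (k < n)%nat -> f k = g k) -> sumR n f = sumR n g.
Proof.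
  induction n as [|n IH]; intros H; simpl; [reflexivity|].
  rewrite IH by (intros; apply H; lia). now rewrite H by lia.
Qed.

Lemma sumR_zero n : sumR n (fun _ => 0) = 0.
Proof. induction n as [|n IH]; simpl; [|rewrite IH]; ring. Qed.

Lemma sumR_plus n f g : sumR n (fun k => f k + g k) = sumR n f + sumR n g.
Proof. induction n as [|n IH]; simpl; [|rewrite IH]; ring. Qed.

Lemma sumR_scal_l n c f : sumR n (fun k => c * f k) = c * sumR n f.
Proof. induction n as [|n IH]; simpl; [|rewrite IH]; ring. Qed.

Lemma sumR_scal_r n c f : sumR n (fun k => f k * c) = sumR n f * c.
Proof. induction n as [|n IH]; simpl; [|rewrite IH]; ring. Qed.

Lemma sumR_swap n m f :
  sumR n (fun k => sumR m (fun l => f k l)) = sumR m (fun l => sumR n (fun k => f k l)).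
Proof.
  induction n as [|n IH]; simpl; [now rewrite sumR_zero|].
  now rewrite IH, <- sumR_plus.
Qed.

Lemma mid_sym a b : mid a b = mid b a.
Proof. unfold mid. now rewrite Nat.eqb_sym. Qed.

Lemma sumR_mid_l n a f : (a < n)%nat -> sumR n (fun k => mid a k * f k) = f a.
Proof.
  induction n as [|n IH]; intros Ha; [lia|]. simpl. unfold mid at 2.
  destruct (Nat.eqb_spec a n) as [->|Hne].
  - rewrite (sumR_ext n _ (fun _ => 0)), sumR_zero; [ring|].
    intros k Hk. unfold mid. destruct (Nat.eqb_spec n k); [lia|ring].
  - rewrite IH by lia. ring.
Qed.

Lemma sumR_mid_r n b f : (b < n)%nat -> sumR n (fun k => f k * mid k b) = f b.
Proof.
  intros Hb. rewrite <- (sumR_mid_l n b f Hb). apply sumR_ext; intros k _.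
  rewrite mid_sym. ring.
Qed.

Lemma sumR_le n f g : (forall k, (k < n)%nat -> f k <= g k) -> sumR n f <= sumR n g.
Proof.
  induction n as [|n IH]; intros H; simpl; [lra|].
  apply Rplus_le_compat; [apply IH; intros|apply H]; auto.
Qed.

Lemma sumR_nonneg n f : (forall k, (k < n)%nat -> 0 <= f k) -> 0 <= sumR n f.
Proof. intros H. rewrite <- (sumR_zero n). now apply sumR_le. Qed.

Lemma sumR_term_le n f k : (forall l, (l < n)%nat -> 0 <= f l) -> (k < n)%nat ->
  f k <= sumR n f.
Proof.
  induction n as [|n IH]; intros H Hk; [lia|]. simpl.
  destruct (Nat.eq_dec k n) as [->|Hne].
  - pose proof (sumR_nonneg n f ltac:(auto)). lra.
  - pose proof (IH ltac:(auto) ltac:(lia)). pose proof (H n ltac:(lia)). lra.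
Qed.

Lemma Rabs_sumR_le n f : Rabs (sumR n f) <= sumR n (fun k => Rabs (f k)).
Proof.
  induction n as [|n IH]; simpl; [rewrite Rabs_R0; lra|].
  eapply Rle_trans; [apply Rabs_triang|lra].
Qed.

Lemma sumC_ext n f g : (forall k, (k < n)%nat -> f k = g k) -> sumC n f = sumC n g.
Proof.
  induction n as [|n IH]; intros H; simpl; [reflexivity|].
  rewrite IH by (intros; apply H; lia). now rewrite H by lia.
Qed.

Lemma sumC_zero n : sumC n (fun _ => RtoC 0) = RtoC 0.
Proof. induction n as [|n IH]; simpl; [|rewrite IH]; ring. Qed.

Lemma sumC_plus n f g : sumC n (fun k => f k + g k)%C = (sumC n f + sumC n g)%C.
Proof. induction n as [|n IH]; simpl; [|rewrite IH]; ring. Qed.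

Lemma sumC_minus n f g : sumC n (fun k => f k - g k)%C = (sumC n f - sumC n g)%C.
Proof. induction n as [|n IH]; simpl; [|rewrite IH]; ring. Qed.

Lemma sumC_scal_l n c f : sumC n (fun k => c * f k)%C = (c * sumC n f)%C.
Proof. induction n as [|n IH]; simpl; [|rewrite IH]; ring. Qed.

Lemma sumC_scal_r n c f : sumC n (fun k => f k * c)%C = (sumC n f * c)%C.
Proof. induction n as [|n IH]; simpl; [|rewrite IH]; ring. Qed.

Lemma sumC_swap n m f :
  sumC n (fun k => sumC m (fun l => f k l)) = sumC m (fun l => sumC n (fun k => f k l)).
Proof.
  induction n as [|n IH]; simpl; [now rewrite sumC_zero|].
  now rewrite IH, <- sumC_plus.
Qed.

Lemma sumC_mid_l n a f : (a < n)%nat -> sumC n (fun k => RtoC (mid a k) * f k)%C = f a.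
Proof.
  induction n as [|n IH]; intros Ha; [lia|]. simpl. unfold mid at 2.
  destruct (Nat.eqb_spec a n) as [->|Hne].
  - rewrite (sumC_ext n _ (fun _ => RtoC 0)), sumC_zero; [ring|].
    intros k Hk. unfold mid. destruct (Nat.eqb_spec n k); [lia|ring].
  - rewrite IH by lia. ring.
Qed.

Lemma sumC_mid_r n b f : (b < n)%nat -> sumC n (fun k => f k * RtoC (mid k b))%C = f b.
Proof.
  intros Hb. rewrite <- (sumC_mid_l n b f Hb). apply sumC_ext; intros k _.
  rewrite mid_sym. ring.
Qed.

Lemma sumC_pair n f g : sumC n (fun k => (f k, g k)) = (sumR n f, sumR n g).
Proof. induction n as [|n IH]; simpl; [|rewrite IH]; reflexivity. Qed.

Lemma continuous_of_is_derive (f : R -> R) (t l : R) : is_derive f t l -> continuous f t.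
Proof.
  intros H. apply (ex_derive_continuous (K := R_AbsRing) (V := R_NormedModule)).
  now exists l.
Qed.

Lemma ex_RInt_continuous_R (f : R -> R) (a b : R) : (forall t, continuous f t) -> ex_RInt f a b.
Proof. intros H. apply (ex_RInt_continuous (V := R_CompleteNormedModule)). auto. Qed.

Lemma continuous_Rplus (f g : R -> R) (t : R) : continuous f t -> continuous g t ->
  continuous (fun u => f u + g u) t.
Proof. apply (continuous_plus (U := R_UniformSpace) (K := R_AbsRing) (V := R_NormedModule)). Qed.

Lemma continuous_Rmult (f g : R -> R) (t : R) : continuous f t -> continuous g t ->
  continuous (fun u => f u * g u) t.
Proof. apply (continuous_mult (U := R_UniformSpace) (K := R_AbsRing)). Qed.

Lemma continuous_Rscal (c : R) (f : R -> R) (t : R) :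
  continuous f t -> continuous (fun u => c * f u) t.
Proof.
  apply continuous_Rmult. apply (continuous_const (U := R_UniformSpace) (V := R_UniformSpace)).
Qed.

Lemma continuous_sumR n (f : nat -> R -> R) (t : R) :
  (forall k, (k < n)%nat -> continuous (f k) t) ->
  continuous (fun u => sumR n (fun k => f k u)) t.
Proof.
  induction n as [|n IH]; intros H; simpl.
  - apply (continuous_const (U := R_UniformSpace) (V := R_UniformSpace)).
  - apply (continuous_Rplus (fun u => sumR n (fun k => f k u)) (f n)).
    + apply IH. intros; apply H; lia.
    + apply H; lia.
Qed.

Lemma is_derive_sumR n (f : nat -> R -> R) (df : nat -> R) t :
  (forall k, (k < n)%nat -> is_derive (f k) t (df k)) ->
  is_derive (fun s => sumR n (fun k => f k s)) t (sumR n df).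
Proof.
  induction n as [|n IH]; intros H; simpl.
  - exact (is_derive_const (K := R_AbsRing) (V := R_NormedModule) 0 t).
  - apply (is_derive_plus (fun s => sumR n (fun k => f k s)) (f n)).
    + apply IH. intros; apply H; lia.
    + apply H; lia.
Qed.

Lemma is_derive_Rmult (f g : R -> R) t df dg :
  is_derive f t df -> is_derive g t dg ->
  is_derive (fun s => f s * g s) t (df * g t + f t * dg).
Proof. intros Hf Hg. apply (is_derive_mult f g t df dg Hf Hg). intros; apply Rmult_comm. Qed.

Lemma is_derive_exp_scal (c t : R) : is_derive (fun s => exp (c * s)) t (c * exp (c * t)).
Proof. auto_derive; [exact I|ring]. Qed.

Lemma continuous_exp_scal (c t : R) : continuous (fun s => exp (c * s)) t.
Proof. eapply continuous_of_is_derive, is_derive_exp_scal. Qed.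

Lemma is_derive_zero_eq (f : R -> R) s t :
  (forall u, is_derive f u 0) -> f s = f t.
Proof.
  intros Hf. destruct (Rtotal_order s t) as [Hst|[->|Hts]]; [| reflexivity |symmetry];
    apply (eq_is_derive f); auto.
Qed.

Lemma is_derive_nonpos_le (h dh : R -> R) t :
  (forall s, is_derive h s (dh s)) -> (forall s, dh s <= 0) -> 0 <= t -> h t <= h 0.
Proof.
  intros Hd Hneg Ht. destruct (Req_dec t 0) as [->|Hne]; [lra|].
  destruct (MVT_gen h 0 t dh) as [c [_ Heq]].
  - intros; apply Hd.
  - intros s _. apply continuity_pt_filterlim. eapply continuous_of_is_derive, Hd.
  - specialize (Hneg c). nra.
Qed.

(** * The matrix exponential *)

Definition mat_abs_sum (N : nat) (A : mat) : R :=
  sumR N (fun a => sumR N (fun b => Rabs (A a b))).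

Lemma mat_abs_sum_nonneg N A : 0 <= mat_abs_sum N A.
Proof. apply sumR_nonneg; intros; apply sumR_nonneg; intros; apply Rabs_pos. Qed.

Lemma row_abs_sum_le N A a : (a < N)%nat ->
  sumR N (fun k => Rabs (A a k)) <= mat_abs_sum N A.
Proof.
  intros Ha. apply (sumR_term_le N (fun a => sumR N (fun b => Rabs (A a b)))); auto.
  intros; apply sumR_nonneg; intros; apply Rabs_pos.
Qed.

Lemma col_abs_sum_le N A b : (b < N)%nat ->
  sumR N (fun k => Rabs (A k b)) <= mat_abs_sum N A.
Proof.
  intros Hb. unfold mat_abs_sum. rewrite sumR_swap.
  apply (sumR_term_le N (fun b => sumR N (fun a => Rabs (A a b)))); auto.
  intros; apply sumR_nonneg; intros; apply Rabs_pos.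
Qed.

Lemma Rabs_entry_le N A a b : (a < N)%nat -> (b < N)%nat ->
  Rabs (A a b) <= mat_abs_sum N A.
Proof.
  intros Ha Hb. eapply Rle_trans; [|apply (row_abs_sum_le N A a Ha)].
  apply (sumR_term_le N (fun k => Rabs (A a k))); auto. intros; apply Rabs_pos.
Qed.

Lemma Rabs_mpow_le N A n a b : (a < N)%nat -> (b < N)%nat ->
  Rabs (mpow N A n a b) <= mat_abs_sum N A ^ n.
Proof.
  revert a b. induction n as [|n IH]; intros a b Ha Hb; simpl.
  - unfold mid. destruct (Nat.eqb a b); rewrite ?Rabs_R1, ?Rabs_R0; lra.
  - eapply Rle_trans; [apply Rabs_sumR_le|].
    eapply Rle_trans.
    + apply (sumR_le _ _ (fun k => Rabs (A a k) * mat_abs_sum N A ^ n)).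
      intros k Hk. rewrite Rabs_mult.
      apply Rmult_le_compat_l; [apply Rabs_pos|auto].
    + rewrite sumR_scal_r. apply Rmult_le_compat_r.
      * apply pow_le, mat_abs_sum_nonneg.
      * now apply row_abs_sum_le.
Qed.

Lemma mpow_S_r N A n a b : (a < N)%nat -> (b < N)%nat ->
  mpow N A (S n) a b = sumR N (fun k => mpow N A n a k * A k b).
Proof.
  revert a b. induction n as [|n IH]; intros a b Ha Hb.
  - simpl. unfold mmul. rewrite sumR_mid_r, sumR_mid_l; auto.
  - change (mpow N A (S (S n)) a b) with (sumR N (fun k => A a k * mpow N A (S n) k b)).
    rewrite (sumR_ext N _ (fun k => sumR N (fun l => A a k * (mpow N A n k l * A l b)))).
    2:{ intros k Hk. now rewrite IH, sumR_scal_l. }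
    rewrite sumR_swap. apply sumR_ext; intros l Hl.
    change (mpow N A (S n) a l) with (sumR N (fun k => A a k * mpow N A n k l)).
    rewrite <- sumR_scal_r. apply sumR_ext; intros; ring.
Qed.

Lemma mpow_nonneg N A n a b :
  (forall a b, (a < N)%nat -> (b < N)%nat -> 0 <= A a b) ->
  (a < N)%nat -> (b < N)%nat -> 0 <= mpow N A n a b.
Proof.
  intros HA. revert a b. induction n as [|n IH]; intros a b Ha Hb; simpl.
  - unfold mid. destruct (Nat.eqb a b); lra.
  - apply sumR_nonneg. intros k Hk. apply Rmult_le_pos; auto.
Qed.

Definition expm_coef (N : nat) (A : mat) (a b n : nat) : R :=
  mpow N A n a b / INR (fact n).

Lemma expm_PSeries N A t a b : expm N A t a b = PSeries (expm_coef N A a b) t.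
Proof.
  apply Series_ext; intros n. unfold expm_coef. field. apply INR_fact_neq_0.
Qed.

Lemma pow_div_fact_le_exp y n : 0 <= y -> y ^ n / INR (fact n) <= exp y.
Proof.
  intros Hy. eapply Rle_trans; [|apply (exp_ge_taylor y n Hy)].
  destruct n as [|n]; simpl; [lra|].
  assert (0 <= sum_f_R0 (fun k => y ^ k / INR (fact k)) n).
  { apply cond_pos_sum. intros k. apply Rmult_le_pos; [now apply pow_le|].
    apply Rlt_le, Rinv_0_lt_compat, INR_fact_lt_0. }
  simpl in *. lra.
Qed.

Lemma CV_radius_expm_coef N A a b : (a < N)%nat -> (b < N)%nat ->
  CV_radius (expm_coef N A a b) = p_infty.
Proof.
  intros Ha Hb.
  assert (Hbound : forall r : R, Rbar_le r (CV_radius (expm_coef N A a b))).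
  { intros r. apply (proj1 (CV_radius_bounded _)).
    exists (exp (mat_abs_sum N A * Rabs r)). intros n.
    eapply Rle_trans; [|apply pow_div_fact_le_exp].
    2: apply Rmult_le_pos; [apply mat_abs_sum_nonneg|apply Rabs_pos].
    unfold expm_coef. pose proof (INR_fact_lt_0 n).
    rewrite Rpow_mult_distr, Rabs_mult, Rabs_div, (Rabs_right (INR _)), <- RPow_abs
      by lra.
    unfold Rdiv. rewrite Rmult_assoc, (Rmult_comm (/ _)), <- Rmult_assoc.
    apply Rmult_le_compat_r; [apply Rlt_le, Rinv_0_lt_compat; auto|].
    apply Rmult_le_compat_r; [apply pow_le, Rabs_pos|].
    now apply Rabs_mpow_le. }
  destruct (CV_radius (expm_coef N A a b)) as [r| |] eqn:E; auto.
  - specialize (Hbound (r + 1)). simpl in Hbound. lra.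
  - now specialize (Hbound 0).
Qed.

Lemma ex_series_expm N A t a b : (a < N)%nat -> (b < N)%nat ->
  ex_series (fun n => mpow N A n a b * t ^ n / INR (fact n)).
Proof.
  intros Ha Hb.
  eapply ex_series_ext; [|apply ex_series_Rabs, (CV_disk_inside (expm_coef N A a b) t)].
  - intros n. simpl. unfold expm_coef. field. apply INR_fact_neq_0.
  - now rewrite CV_radius_expm_coef.
Qed.

Lemma Series_sumR_scal n (c : nat -> R) (u : nat -> nat -> R) :
  (forall k, (k < n)%nat -> ex_series (u k)) ->
  Series (fun m => sumR n (fun k => c k * u k m)) = sumR n (fun k => c k * Series (u k)).
Proof.
  intros H. apply is_series_unique. induction n as [|n IH]; simpl.
  - eapply is_series_ext; [|apply (is_pseries_0 (fun _ : nat => 0))].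
    intros m. simpl. unfold scal; simpl. unfold mult; simpl. ring.
  - apply (is_series_plus (fun m => sumR n (fun k => c k * u k m))).
    + apply IH. intros; apply H; lia.
    + apply (is_series_scal_l (K := R_AbsRing) (V := R_NormedModule)).
      apply Series_correct, H. lia.
Qed.

Lemma is_derive_expm_series N A t a b : (a < N)%nat -> (b < N)%nat ->
  is_derive (fun t => expm N A t a b) t
    (Series (fun n => mpow N A (S n) a b * t ^ n / INR (fact n))).
Proof.
  intros Ha Hb.
  eapply is_derive_ext; [intros s; symmetry; apply expm_PSeries|].
  replace (Series _) with (PSeries (PS_derive (expm_coef N A a b)) t).
  - apply is_derive_PSeries. now rewrite CV_radius_expm_coef.
  - apply Series_ext; intros n. unfold PS_derive, expm_coef.
    rewrite fact_simpl, mult_INR. field.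
    split; [apply INR_fact_neq_0|apply not_0_INR; lia].
Qed.

Lemma is_derive_expm_l N A t a b : (a < N)%nat -> (b < N)%nat ->
  is_derive (fun t => expm N A t a b) t (sumR N (fun k => A a k * expm N A t k b)).
Proof.
  intros Ha Hb.
  replace (sumR N _) with (Series (fun n => mpow N A (S n) a b * t ^ n / INR (fact n))).
  { now apply is_derive_expm_series. }
  unfold expm. rewrite <- Series_sumR_scal by (intros; now apply ex_series_expm).
  apply Series_ext; intros n. simpl mpow. unfold mmul, Rdiv.
  rewrite <- !sumR_scal_r. apply sumR_ext; intros; ring.
Qed.

Lemma is_derive_expm_r N A t a b : (a < N)%nat -> (b < N)%nat ->
  is_derive (fun t => expm N A t a b) t (sumR N (fun k => expm N A t a k * A k b)).
Proof.
  intros Ha Hb.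
  replace (sumR N _) with (Series (fun n => mpow N A (S n) a b * t ^ n / INR (fact n))).
  { now apply is_derive_expm_series. }
  rewrite (sumR_ext N _ (fun k => A k b * expm N A t a k)) by (intros; ring).
  unfold expm. rewrite <- Series_sumR_scal by (intros; now apply ex_series_expm).
  apply Series_ext; intros n. rewrite mpow_S_r by auto. unfold Rdiv.
  rewrite <- !sumR_scal_r. apply sumR_ext; intros; ring.
Qed.

Lemma continuous_expm N A t a b : (a < N)%nat -> (b < N)%nat ->
  continuous (fun t => expm N A t a b) t.
Proof.
  intros Ha Hb. eapply continuous_of_is_derive. now apply is_derive_expm_l.
Qed.

Lemma expm_0 N A a b : expm N A 0 a b = mid a b.
Proof. rewrite expm_PSeries, PSeries_0. unfold expm_coef. simpl. field. Qed.

Lemma expm_nonneg N A t a b :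
  (forall a b, (a < N)%nat -> (b < N)%nat -> 0 <= A a b) ->
  0 <= t -> (a < N)%nat -> (b < N)%nat -> 0 <= expm N A t a b.
Proof.
  intros HA Ht Ha Hb.
  replace 0 with (Series (fun _ : nat => 0 * 0)) at 1 by (rewrite Series_scal_l; ring).
  apply Series_le; [|now apply ex_series_expm].
  intros n. rewrite Rmult_0_l. split; [lra|]. apply Rmult_le_pos.
  - apply Rmult_le_pos; [now apply mpow_nonneg|now apply pow_le].
  - apply Rlt_le, Rinv_0_lt_compat, INR_fact_lt_0.
Qed.

(** * Exponentials of rate matrices *)

Definition is_rate_matrix (N : nat) (A : mat) : Prop :=
  (forall a b, (a < N)%nat -> (b < N)%nat -> a <> b -> 0 <= A a b) /\
  (forall b, (b < N)%nat -> sumR N (fun a => A a b) = 0).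

Lemma expm_col_sum N A t b : is_rate_matrix N A -> (b < N)%nat ->
  sumR N (fun a => expm N A t a b) = 1.
Proof.
  intros [_ Hcol] Hb.
  rewrite (is_derive_zero_eq (fun s => sumR N (fun a => expm N A s a b)) t 0).
  - rewrite (sumR_ext N _ (fun a => 1 * mid a b)) by (intros; rewrite expm_0; ring).
    exact (sumR_mid_r N b (fun _ => 1) Hb).
  - intros s.
    replace 0 with (sumR N (fun a => sumR N (fun k => A a k * expm N A s k b))).
    + apply is_derive_sumR. intros a Ha. now apply is_derive_expm_l.
    + rewrite sumR_swap, <- (sumR_zero N). apply sumR_ext. intros k Hk.
      now rewrite sumR_scal_r, Hcol, Rmult_0_l.
Qed.

Lemma Rabs_mult_le_avg_sq (u v : R) : Rabs (u * v) <= (u * u + v * v) / 2.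
Proof.
  apply Rabs_le. pose proof (Rle_0_sqr (u + v)). pose proof (Rle_0_sqr (u - v)).
  unfold Rsqr in *. split; nra.
Qed.

Lemma Rabs_quad_form_le N A (x : nat -> R) :
  Rabs (sumR N (fun a => x a * sumR N (fun k => A a k * x k)))
  <= mat_abs_sum N A * sumR N (fun a => x a * x a).
Proof.
  set (sq := sumR N (fun a => x a * x a)).
  assert (Hterm : forall a, (a < N)%nat ->
    Rabs (x a * sumR N (fun k => A a k * x k)) <=
    sumR N (fun k => Rabs (A a k) * (x a * x a)) / 2 +
    sumR N (fun k => Rabs (A a k) * (x k * x k)) / 2).
  { intros a Ha. unfold Rdiv. rewrite <- !sumR_scal_r, <- sumR_plus, <- sumR_scal_l.
    eapply Rle_trans; [apply Rabs_sumR_le|]. apply sumR_le. intros k Hk.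
    replace (Rabs (x a * (A a k * x k))) with (Rabs (A a k) * Rabs (x a * x k))
      by (rewrite <- Rabs_mult; f_equal; ring).
    apply Rle_trans with (Rabs (A a k) * ((x a * x a + x k * x k) / 2)); [|right; field].
    apply Rmult_le_compat_l; [apply Rabs_pos|apply Rabs_mult_le_avg_sq]. }
  assert (Hrow : sumR N (fun a => sumR N (fun k => Rabs (A a k) * (x a * x a)))
                 <= mat_abs_sum N A * sq).
  { unfold sq. rewrite <- sumR_scal_l. apply sumR_le. intros a Ha.
    rewrite sumR_scal_r. apply Rmult_le_compat_r; [nra|now apply row_abs_sum_le]. }
  assert (Hcol : sumR N (fun a => sumR N (fun k => Rabs (A a k) * (x k * x k)))
                 <= mat_abs_sum N A * sq).
  { unfold sq. rewrite sumR_swap, <- sumR_scal_l. apply sumR_le. intros k Hk.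
    rewrite sumR_scal_r. apply Rmult_le_compat_r; [nra|now apply col_abs_sum_le]. }
  eapply Rle_trans; [apply Rabs_sumR_le|].
  eapply Rle_trans; [apply sumR_le, Hterm|].
  rewrite sumR_plus. unfold Rdiv. rewrite !sumR_scal_r. lra.
Qed.

Lemma linear_ode_zero N A (D : R -> nat -> R) t a :
  (forall s a, (a < N)%nat ->
     is_derive (fun s => D s a) s (sumR N (fun k => A a k * D s k))) ->
  (forall a, (a < N)%nat -> D 0 a = 0) ->
  0 <= t -> (a < N)%nat -> D t a = 0.
Proof.
  intros HD HD0 Ht Ha.
  set (c := 2 * mat_abs_sum N A).
  set (f := fun s => sumR N (fun a => D s a * D s a)).
  set (df := fun s => 2 * sumR N (fun a => D s a * sumR N (fun k => A a k * D s k))).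
  assert (Hf : forall s, is_derive f s (df s)).
  { intros s. unfold df. rewrite <- sumR_scal_l.
    rewrite (sumR_ext N _ (fun a => sumR N (fun k => A a k * D s k) * D s a +
                                     D s a * sumR N (fun k => A a k * D s k)))
      by (intros; ring).
    apply is_derive_sumR. intros b Hb. apply is_derive_Rmult; now apply HD. }
  assert (Hdf : forall s, df s <= c * f s).
  { intros s. unfold df, c, f.
    pose proof (Rabs_quad_form_le N A (D s)) as Hq.
    pose proof (Rle_abs (sumR N (fun a => D s a * sumR N (fun k => A a k * D s k)))).
    lra. }
  (* Gronwall: [exp (- c s) * f s] is nonincreasing and vanishes at [0]. *)
  assert (Hmono : exp (- c * t) * f t <= exp (- c * 0) * f 0).
  { apply (is_derive_nonpos_le (fun s => exp (- c * s) * f s)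
             (fun s => - c * exp (- c * s) * f s + exp (- c * s) * df s)); auto.
    - intros s. apply (is_derive_Rmult (fun s => exp (- c * s)) f);
        [apply is_derive_exp_scal|apply Hf].
    - intros s. pose proof (exp_pos (- c * s)). pose proof (Hdf s). nra. }
  assert (Hf0 : f 0 = 0).
  { unfold f. rewrite (sumR_ext N _ (fun _ => 0)) by (intros; rewrite HD0; auto; ring).
    apply sumR_zero. }
  assert (Hft : f t <= 0).
  { rewrite Hf0, Rmult_0_r in Hmono. pose proof (exp_pos (- c * t)). nra. }
  assert (Hterm : D t a * D t a <= f t).
  { apply (sumR_term_le N (fun a => D t a * D t a)); auto. intros; nra. }
  nra.
Qed.

Definition mat_shift (A : mat) (c : R) : mat := fun a b => A a b + c * mid a b.

Lemma expm_mat_shift N A c t a b : 0 <= t -> (a < N)%nat -> (b < N)%nat ->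
  expm N A t a b = exp (- c * t) * expm N (mat_shift A c) t a b.
Proof.
  intros Ht Ha Hb. apply Rminus_diag_uniq.
  apply (linear_ode_zero N A
           (fun s a => expm N A s a b - exp (- c * s) * expm N (mat_shift A c) s a b));
    auto.
  - intros s a' Ha'. cbv beta.
    set (e := exp (- c * s)).
    set (M := fun k => expm N (mat_shift A c) s k b).
    assert (HM : is_derive (fun s => exp (- c * s) * expm N (mat_shift A c) s a' b) s
                   (e * sumR N (fun k => A a' k * M k))).
    { replace (e * _) with (- c * e * M a' + e * sumR N (fun k => mat_shift A c a' k * M k)).
      - apply is_derive_Rmult; [apply is_derive_exp_scal|now apply is_derive_expm_l].
      - unfold mat_shift.
        rewrite (sumR_ext N _ (fun k => A a' k * M k + c * (mid a' k * M k))) by (intros; ring).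
        rewrite sumR_plus, sumR_scal_l, sumR_mid_l by auto. ring. }
    replace (sumR N _) with (minus (sumR N (fun k => A a' k * expm N A s k b))
                                   (e * sumR N (fun k => A a' k * M k))).
    + apply (is_derive_minus (V := R_NormedModule)); [now apply is_derive_expm_l|exact HM].
    + rewrite (sumR_ext N
        (fun k => A a' k * (expm N A s k b - e * expm N (mat_shift A c) s k b))
        (fun k => A a' k * expm N A s k b + - e * (A a' k * M k))) by (intros; unfold M; ring).
      rewrite sumR_plus, sumR_scal_l. unfold minus, plus, opp. simpl. ring.
  - intros a' Ha'. rewrite !expm_0, Rmult_0_r, exp_0. ring.
Qed.

Lemma expm_rate_bounds N A t a b : is_rate_matrix N A -> 0 <= t ->
  (a < N)%nat -> (b < N)%nat -> 0 <= expm N A t a b <= 1.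
Proof.
  intros HA Ht Ha Hb.
  assert (Hpos : forall a, (a < N)%nat -> 0 <= expm N A t a b).
  { intros a' Ha'. rewrite (expm_mat_shift N A (mat_abs_sum N A)) by auto.
    apply Rmult_le_pos; [apply Rlt_le, exp_pos|].
    apply expm_nonneg; auto. intros k l Hk Hl. unfold mat_shift, mid.
    destruct (Nat.eqb_spec k l) as [<-|Hkl].
    - pose proof (Rabs_entry_le N A k k Hk Hk). pose proof (Rabs_maj2 (A k k)). lra.
    - pose proof (proj1 HA k l Hk Hl Hkl). lra. }
  split; auto.
  rewrite <- (expm_col_sum N A t b HA Hb).
  now apply (sumR_term_le N (fun a => expm N A t a b)).
Qed.

(** * Improper integrals and the Laplace transform *)

Definition RInt_pinfty (f : R -> R) : R := real (Lim (fun T => RInt f 0 T) p_infty).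

Lemma RInt_pinfty_unique (f : R -> R) (l : R) :
  is_lim (fun T => RInt f 0 T) p_infty l -> RInt_pinfty f = l.
Proof. intros H. unfold RInt_pinfty. now rewrite (is_lim_unique _ _ _ H). Qed.

Lemma exp_bound_coef_nonneg (s M : R) (f : R -> R) :
  (forall t, 0 <= t -> Rabs (f t) <= M * exp (- s * t)) -> 0 <= M.
Proof.
  intros Hb. pose proof (Hb 0 (Rle_refl 0)) as H0. rewrite Rmult_0_r, exp_0 in H0.
  pose proof (Rabs_pos (f 0)). lra.
Qed.

Lemma exp_neg_eventually_lt (s M eps : R) : 0 < s -> 0 <= M -> 0 < eps ->
  exists T, 0 <= T /\ forall u, T < u -> M * exp (- s * u) < eps.
Proof.
  intros Hs HM Heps. set (e := eps / (M + 1)).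
  assert (He : 0 < e) by (apply Rdiv_lt_0_compat; lra).
  exists (Rmax 0 (- ln e / s)). split; [apply Rmax_l|]. intros u Hu.
  assert (Hexp : exp (- s * u) < e).
  { rewrite <- (exp_ln e He). apply exp_increasing.
    assert (Hlt : - ln e / s < u) by (eapply Rle_lt_trans; [apply Rmax_r|exact Hu]).
    apply (Rmult_lt_compat_l s) in Hlt; auto.
    replace (s * (- ln e / s)) with (- ln e) in Hlt by (field; lra). lra. }
  apply Rle_lt_trans with (M * e); [apply Rmult_le_compat_l; lra|].
  apply (Rmult_lt_reg_r (M + 1)); [lra|].
  unfold e. replace (M * (eps / (M + 1)) * (M + 1)) with (M * eps) by (field; lra). nra.
Qed.

Lemma RInt_exp_neg (s u v : R) : s <> 0 ->
  RInt (fun t => exp (- s * t)) u v = (exp (- s * u) - exp (- s * v)) / s.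
Proof.
  intros Hs. apply is_RInt_unique.
  replace ((exp (- s * u) - exp (- s * v)) / s)
    with (minus (- exp (- s * v) / s) (- exp (- s * u) / s))
    by (unfold minus, plus, opp; simpl; field; auto).
  apply (is_RInt_derive (V := R_CompleteNormedModule) (fun t => - exp (- s * t) / s)).
  - intros t _. auto_derive; [exact I|field; auto].
  - intros t _. apply continuous_exp_scal.
Qed.

Lemma Rabs_RInt_exp_bound_le (s M : R) (f : R -> R) (u v : R) :
  0 < s -> (forall t, continuous f t) ->
  (forall t, 0 <= t -> Rabs (f t) <= M * exp (- s * t)) -> 0 <= u <= v ->
  Rabs (RInt f 0 v - RInt f 0 u) <= M * exp (- s * u) / s.
Proof.
  intros Hs Hc Hb Huv.
  pose proof (exp_bound_coef_nonneg s M f Hb) as HM.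
  assert (Hexp : forall t, continuous (fun t => exp (- s * t)) t)
    by (intros; apply continuous_exp_scal).
  assert (Hch := RInt_Chasles f 0 u v (ex_RInt_continuous_R f 0 u Hc)
                   (ex_RInt_continuous_R f u v Hc)).
  change (RInt f 0 u + RInt f u v = RInt f 0 v) in Hch.
  replace (RInt f 0 v - RInt f 0 u) with (RInt f u v) by lra.
  eapply Rle_trans; [apply abs_RInt_le; [lra|now apply ex_RInt_continuous_R]|].
  eapply Rle_trans.
  { apply (RInt_le _ (fun t => M * exp (- s * t))); [lra| | |].
    - apply ex_RInt_norm, ex_RInt_continuous_R; auto.
    - apply ex_RInt_continuous_R. intros t. now apply continuous_Rscal.
    - intros t Ht. apply Hb. lra. }
  rewrite (RInt_scal (V := R_CompleteNormedModule)) by now apply ex_RInt_continuous_R.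
  rewrite RInt_exp_neg by lra. unfold scal; simpl; unfold mult; simpl.
  pose proof (exp_pos (- s * v)).
  unfold Rdiv. rewrite Rmult_assoc. apply Rmult_le_compat_l; [exact HM|].
  apply Rmult_le_compat_r; [apply Rlt_le, Rinv_0_lt_compat; lra|lra].
Qed.

Lemma ex_lim_RInt_exp_bound (s M : R) (f : R -> R) :
  0 < s -> (forall t, continuous f t) ->
  (forall t, 0 <= t -> Rabs (f t) <= M * exp (- s * t)) ->
  exists l : R, is_lim (fun T => RInt f 0 T) p_infty l.
Proof.
  intros Hs Hc Hb.
  apply (filterlim_locally_closely (U := R_CompleteSpace) (F := Rbar_locally p_infty)).
  apply filterlim_closely. intros eps.
  destruct (exp_neg_eventually_lt s M (s * eps)) as [T [HT0 HT]]; auto.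
  { now apply (exp_bound_coef_nonneg s M f). }
  { apply Rmult_lt_0_compat; [exact Hs|apply cond_pos]. }
  assert (Hclose : forall u v, T < u -> u <= v -> Rabs (RInt f 0 v - RInt f 0 u) < eps).
  { intros u v Hu Huv.
    eapply Rle_lt_trans; [apply (Rabs_RInt_exp_bound_le s M); auto; lra|].
    apply Rlt_div_l; [lra|]. rewrite (Rmult_comm eps). now apply HT. }
  exists (fun u => T < u). split; [now exists T|].
  intros u v Hu Hv. change (Rabs (RInt f 0 v - RInt f 0 u) < eps).
  destruct (Rle_dec u v) as [Huv|Hvu].
  - now apply Hclose.
  - rewrite Rabs_minus_sym. apply Hclose; auto; lra.
Qed.

Lemma is_lim_exp_bound_zero (s M : R) (g : R -> R) : 0 < s ->
  (forall t, 0 <= t -> Rabs (g t) <= M * exp (- s * t)) -> is_lim g p_infty 0.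
Proof.
  intros Hs Hb P [eps HP].
  destruct (exp_neg_eventually_lt s M eps) as [T [HT0 HT]]; auto using cond_pos.
  { now apply (exp_bound_coef_nonneg s M g). }
  exists T. intros t Ht. apply HP.
  change (Rabs (g t - 0) < eps). rewrite Rminus_0_r.
  eapply Rle_lt_trans; [apply Hb; lra|]. now apply HT.
Qed.

Lemma is_lim_RInt_derive (p q : R -> R) :
  (forall t, is_derive p t (q t)) -> (forall t, continuous q t) ->
  is_lim p p_infty 0 -> is_lim (fun T => RInt q 0 T) p_infty (- p 0).
Proof.
  intros Hd Hc Hp.
  apply (is_lim_ext (fun T => p T - p 0)).
  { intros T. symmetry. apply is_RInt_unique.
    apply (is_RInt_derive (V := R_CompleteNormedModule) p q); auto. }
  replace (- p 0) with (0 - p 0) by ring.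
  apply is_lim_minus'; [exact Hp|apply is_lim_const].
Qed.

Lemma is_lim_RInt_plus (f g : R -> R) (lf lg : R) :
  (forall t, continuous f t) -> (forall t, continuous g t) ->
  is_lim (fun T => RInt f 0 T) p_infty lf -> is_lim (fun T => RInt g 0 T) p_infty lg ->
  is_lim (fun T => RInt (fun t => f t + g t) 0 T) p_infty (lf + lg).
Proof.
  intros Hf Hg Hlf Hlg. apply (is_lim_ext (fun T => RInt f 0 T + RInt g 0 T)).
  { intros T. symmetry.
    apply (RInt_plus (V := R_CompleteNormedModule)); now apply ex_RInt_continuous_R. }
  now apply is_lim_plus'.
Qed.

Lemma is_lim_RInt_scal (c : R) (f : R -> R) (l : R) : (forall t, continuous f t) ->
  is_lim (fun T => RInt f 0 T) p_infty l ->
  is_lim (fun T => RInt (fun t => c * f t) 0 T) p_infty (c * l).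
Proof.
  intros Hf Hl. apply (is_lim_ext (fun T => c * RInt f 0 T)).
  { intros T. symmetry.
    apply (RInt_scal (V := R_CompleteNormedModule)). now apply ex_RInt_continuous_R. }
  now apply (is_lim_scal_l _ c p_infty l).
Qed.

Lemma is_lim_RInt_sumR n (beta : nat -> R) (g : nat -> R -> R) (l : nat -> R) :
  (forall k, (k < n)%nat -> forall t, continuous (g k) t) ->
  (forall k, (k < n)%nat -> is_lim (fun T => RInt (g k) 0 T) p_infty (l k)) ->
  is_lim (fun T => RInt (fun t => sumR n (fun k => beta k * g k t)) 0 T) p_infty
    (sumR n (fun k => beta k * l k)).
Proof.
  induction n as [|n IH]; intros Hc Hl; simpl.
  - apply (is_lim_ext (fun _ => 0)); [|apply is_lim_const].
    intros T. rewrite RInt_const. unfold scal; simpl; unfold mult; simpl. ring.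
  - apply is_lim_RInt_plus.
    + intros t. apply (continuous_sumR n (fun k t => beta k * g k t)).
      intros k Hk. apply continuous_Rscal, Hc. lia.
    + intros t. apply continuous_Rscal, Hc. lia.
    + apply IH; intros; [apply Hc|apply Hl]; lia.
    + apply is_lim_RInt_scal; [apply Hc|apply Hl]; lia.
Qed.

Definition bounded_continuous (f : R -> R) : Prop :=
  (forall t, continuous f t) /\ exists M, forall t, 0 <= t -> Rabs (f t) <= M.

Definition damped (s : R) (h : R -> R) : Prop :=
  (forall t, continuous h t) /\ forall t, 0 <= t -> Rabs (h t) <= exp (- s * t).

Lemma bounded_continuous_sumR n (beta : nat -> R) (g : nat -> R -> R) :
  (forall k, (k < n)%nat -> bounded_continuous (g k)) ->
  bounded_continuous (fun t => sumR n (fun k => beta k * g k t)).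
Proof.
  induction n as [|n IH]; intros Hg; simpl.
  - split; [intros; apply (continuous_const (U := R_UniformSpace) (V := R_UniformSpace))|].
    exists 0. intros. rewrite Rabs_R0. lra.
  - destruct (IH ltac:(auto)) as [Hc [M HM]]. destruct (Hg n ltac:(lia)) as [Hcn [Mn HMn]].
    split.
    + intros t. apply (continuous_Rplus (fun t => sumR n (fun k => beta k * g k t))); auto.
      now apply continuous_Rscal.
    + exists (M + Rabs (beta n) * Mn). intros t Ht.
      eapply Rle_trans; [apply Rabs_triang|]. rewrite Rabs_mult.
      apply Rplus_le_compat; auto. apply Rmult_le_compat_l; auto using Rabs_pos.
Qed.

Section Damped.

Variables (s : R) (h : R -> R).
Hypotheses (Hs : 0 < s) (Hh : damped s h).

Lemma damped_mult_bound (f : R -> R) : bounded_continuous f ->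
  exists M, forall t, 0 <= t -> Rabs (h t * f t) <= M * exp (- s * t).
Proof.
  intros [_ [M HM]]. exists M. intros t Ht.
  rewrite Rabs_mult, Rmult_comm. pose proof (Rabs_pos (h t)). pose proof (Rabs_pos (f t)).
  apply Rmult_le_compat; auto. apply Hh; auto.
Qed.

Lemma continuous_damped_mult (f : R -> R) t : bounded_continuous f ->
  continuous (fun u => h u * f u) t.
Proof. intros [Hf _]. apply continuous_Rmult; [apply Hh|apply Hf]. Qed.

Lemma is_lim_RInt_damped (f : R -> R) : bounded_continuous f ->
  is_lim (fun T => RInt (fun t => h t * f t) 0 T) p_infty
    (RInt_pinfty (fun t => h t * f t)).
Proof.
  intros Hf. destruct (damped_mult_bound f Hf) as [M HM].
  destruct (ex_lim_RInt_exp_bound s M (fun t => h t * f t)) as [l Hl]; auto.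
  { intros t. now apply continuous_damped_mult. }
  now rewrite (RInt_pinfty_unique _ _ Hl).
Qed.

Lemma is_lim_damped_zero (f : R -> R) : bounded_continuous f ->
  is_lim (fun t => h t * f t) p_infty 0.
Proof.
  intros Hf. destruct (damped_mult_bound f Hf) as [M HM].
  now apply (is_lim_exp_bound_zero s M).
Qed.

Lemma RInt_pinfty_damped_sumR n (beta : nat -> R) (g : nat -> R -> R) :
  (forall k, (k < n)%nat -> bounded_continuous (g k)) ->
  RInt_pinfty (fun t => h t * sumR n (fun k => beta k * g k t)) =
  sumR n (fun k => beta k * RInt_pinfty (fun t => h t * g k t)).
Proof.
  intros Hg. apply RInt_pinfty_unique.
  apply (is_lim_ext (fun T => RInt (fun t => sumR n (fun k => beta k * (h t * g k t))) 0 T)).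
  { intros T. apply RInt_ext. intros t _. rewrite <- sumR_scal_l.
    apply sumR_ext. intros; ring. }
  apply is_lim_RInt_sumR.
  - intros k Hk t. now apply continuous_damped_mult, Hg.
  - intros k Hk. now apply is_lim_RInt_damped, Hg.
Qed.

End Damped.

Lemma RInt_pinfty_damped_derive (s sigma : R) (h1 h2 f g : R -> R) :
  0 < s -> damped s h1 -> damped s h2 ->
  (forall t, is_derive h1 t (- s * h1 t + sigma * h2 t)) ->
  bounded_continuous f -> bounded_continuous g -> (forall t, is_derive f t (g t)) ->
  RInt_pinfty (fun t => h1 t * g t) =
  s * RInt_pinfty (fun t => h1 t * f t) - sigma * RInt_pinfty (fun t => h2 t * f t)
  - h1 0 * f 0.
Proof.
  intros Hs Hh1 Hh2 Hd1 Hf Hg Hdf.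
  pose proof (fun t => continuous_damped_mult s h1 Hh1 f t Hf) as Hc1f.
  pose proof (fun t => continuous_damped_mult s h2 Hh2 f t Hf) as Hc2f.
  pose proof (fun t => continuous_damped_mult s h1 Hh1 g t Hg) as Hc1g.
  set (q := fun t => h1 t * g t + (- s * (h1 t * f t) + sigma * (h2 t * f t))).
  assert (Hftc : is_lim (fun T => RInt q 0 T) p_infty (- (h1 0 * f 0))).
  { apply (is_lim_RInt_derive (fun t => h1 t * f t)).
    - intros t. replace (q t) with ((- s * h1 t + sigma * h2 t) * f t + h1 t * g t)
        by (unfold q; ring).
      now apply is_derive_Rmult.
    - intros t. apply continuous_Rplus; [|apply continuous_Rplus; apply continuous_Rscal];
        auto.
    - now apply (is_lim_damped_zero s h1). }
  assert (Hlin : is_lim (fun T => RInt q 0 T) p_infty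
     (RInt_pinfty (fun t => h1 t * g t) +
      (- s * RInt_pinfty (fun t => h1 t * f t) + sigma * RInt_pinfty (fun t => h2 t * f t)))).
  { apply is_lim_RInt_plus.
    - exact Hc1g.
    - intros t. apply continuous_Rplus; apply continuous_Rscal; auto.
    - now apply (is_lim_RInt_damped s h1).
    - apply is_lim_RInt_plus.
      + intros t. apply continuous_Rscal, Hc1f.
      + intros t. apply continuous_Rscal, Hc2f.
      + apply is_lim_RInt_scal; [exact Hc1f|now apply (is_lim_RInt_damped s h1)].
      + apply is_lim_RInt_scal; [exact Hc2f|now apply (is_lim_RInt_damped s h2)]. }
  apply is_lim_unique in Hftc, Hlin. rewrite Hftc in Hlin. injection Hlin. lra.
Qed.

Definition laplace (w : C) (f : R -> R) : C :=
  (RInt_pinfty (fun t => fst (cexp_neg w t) * f t),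
   RInt_pinfty (fun t => snd (cexp_neg w t) * f t)).

Lemma is_derive_fst_cexp_neg (w : C) (t : R) :
  is_derive (fun t => fst (cexp_neg w t)) t
    (- Re w * fst (cexp_neg w t) + Im w * snd (cexp_neg w t)).
Proof. unfold cexp_neg. simpl. auto_derive; [exact I|ring]. Qed.

Lemma is_derive_snd_cexp_neg (w : C) (t : R) :
  is_derive (fun t => snd (cexp_neg w t)) t
    (- Re w * snd (cexp_neg w t) + - Im w * fst (cexp_neg w t)).
Proof. unfold cexp_neg. simpl. auto_derive; [exact I|ring]. Qed.

Lemma Rabs_exp_mult_le (s x c : R) : -1 <= c <= 1 ->
  Rabs (exp (- s * x) * c) <= exp (- s * x).
Proof.
  intros Hc. pose proof (exp_pos (- s * x)).
  rewrite Rabs_mult, Rabs_pos_eq by lra.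
  assert (Rabs c <= 1) by (apply Rabs_le; lra). nra.
Qed.

Lemma damped_fst_cexp_neg (w : C) : damped (Re w) (fun t => fst (cexp_neg w t)).
Proof.
  split.
  - intros t. eapply continuous_of_is_derive, is_derive_fst_cexp_neg.
  - intros t _. apply Rabs_exp_mult_le, COS_bound.
Qed.

Lemma damped_snd_cexp_neg (w : C) : damped (Re w) (fun t => snd (cexp_neg w t)).
Proof.
  split.
  - intros t. eapply continuous_of_is_derive, is_derive_snd_cexp_neg.
  - intros t _. simpl. rewrite Rabs_Ropp. apply Rabs_exp_mult_le, SIN_bound.
Qed.

Lemma laplace_derive (w : C) (f g : R -> R) : 0 < Re w ->
  bounded_continuous f -> bounded_continuous g -> (forall t, is_derive f t (g t)) ->
  laplace w g = (w * laplace w f - RtoC (f 0))%C.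
Proof.
  intros Hw Hf Hg Hfg. unfold laplace.
  rewrite (RInt_pinfty_damped_derive (Re w) (Im w) (fun t => fst (cexp_neg w t))
             (fun t => snd (cexp_neg w t)) f g),
          (RInt_pinfty_damped_derive (Re w) (- Im w) (fun t => snd (cexp_neg w t))
             (fun t => fst (cexp_neg w t)) f g);
    auto using damped_fst_cexp_neg, damped_snd_cexp_neg,
               is_derive_fst_cexp_neg, is_derive_snd_cexp_neg.
  unfold cexp_neg. simpl. rewrite !Rmult_0_r, exp_0, cos_0, sin_0.
  destruct w as [s tau]. unfold Cmult, Cminus, Cplus, Copp, RtoC. simpl. f_equal; ring.
Qed.

Lemma laplace_sumR (w : C) n (beta : nat -> R) (g : nat -> R -> R) : 0 < Re w ->
  (forall k, (k < n)%nat -> bounded_continuous (g k)) ->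
  laplace w (fun t => sumR n (fun k => beta k * g k t)) =
  sumC n (fun k => RtoC (beta k) * laplace w (g k))%C.
Proof.
  intros Hw Hg. unfold laplace.
  rewrite (RInt_pinfty_damped_sumR (Re w) _ Hw (damped_fst_cexp_neg w)),
          (RInt_pinfty_damped_sumR (Re w) _ Hw (damped_snd_cexp_neg w)) by exact Hg.
  rewrite <- sumC_pair. apply sumC_ext. intros k _.
  unfold Cmult, RtoC. simpl. f_equal; ring.
Qed.

Lemma RInt_gen_laplace (w : C) (f : R -> R) : 0 < Re w -> bounded_continuous f ->
  @RInt_gen C_R_CompleteNormedModule (fun t => cexp_neg w t * RtoC (f t))%C
    (at_point 0) (Rbar_locally p_infty) = laplace w f.
Proof.
  intros Hw Hf.
  assert (Hint : forall h, damped (Re w) h -> forall y,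
            is_RInt (fun t => h t * f t) 0 y (RInt (fun t => h t * f t) 0 y)).
  { intros h Hh y. apply (RInt_correct (V := R_CompleteNormedModule)), ex_RInt_continuous_R.
    intros t. now apply (continuous_damped_mult (Re w)). }
  pose proof (is_lim_RInt_damped (Re w) _ Hw (damped_fst_cexp_neg w) f Hf) as Hre.
  pose proof (is_lim_RInt_damped (Re w) _ Hw (damped_snd_cexp_neg w) f Hf) as Him.
  apply (is_RInt_gen_unique (V := C_R_CompleteNormedModule)
           (Fa := at_point 0) (Fb := Rbar_locally p_infty)).
  intros P [eps Heps].
  destruct (Hre _ (locally_ball (fst (laplace w f)) eps)) as [M1 HM1].
  destruct (Him _ (locally_ball (snd (laplace w f)) eps)) as [M2 HM2].
  apply Filter_prod with (Q := fun x => x = 0) (R := fun y => Rmax M1 M2 < y).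
  - reflexivity.
  - now exists (Rmax M1 M2).
  - intros x y -> Hy. simpl.
    exists (RInt (fun t => fst (cexp_neg w t) * f t) 0 y,
            RInt (fun t => snd (cexp_neg w t) * f t) 0 y).
    split.
    + apply (is_RInt_fct_extend_pair (U := R_NormedModule) (V := R_NormedModule)).
      * eapply is_RInt_ext; [|apply Hint, damped_fst_cexp_neg].
        intros t _. simpl. ring.
      * eapply is_RInt_ext; [|apply Hint, damped_snd_cexp_neg].
        intros t _. simpl. ring.
    + apply Heps. split.
      * apply HM1. eapply Rle_lt_trans; [apply Rmax_l|exact Hy].
      * apply HM2. eapply Rle_lt_trans; [apply Rmax_r|exact Hy].
Qed.

(** * The resolvent of a rate matrix *)

Lemma bounded_continuous_expm N A a b : is_rate_matrix N A ->
  (a < N)%nat -> (b < N)%nat -> bounded_continuous (fun t => expm N A t a b).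
Proof.
  intros HA Ha Hb. split; [intros; now apply continuous_expm|].
  exists 1. intros t Ht. pose proof (expm_rate_bounds N A t a b HA Ht Ha Hb).
  apply Rabs_le. lra.
Qed.

Lemma Phat_laplace N A w a b : is_rate_matrix N A -> 0 < Re w ->
  (a < N)%nat -> (b < N)%nat -> Phat N A w a b = laplace w (fun t => expm N A t a b).
Proof. intros. apply RInt_gen_laplace; auto using bounded_continuous_expm. Qed.

Lemma Phat_resolvent_r N A w a b : is_rate_matrix N A -> 0 < Re w ->
  (a < N)%nat -> (b < N)%nat ->
  (w * Phat N A w a b - sumC N (fun k => Phat N A w a k * RtoC (A k b)))%C = RtoC (mid a b).
Proof.
  intros HA Hw Ha Hb.
  assert (Hcol : forall k, (k < N)%nat -> bounded_continuous (fun t => expm N A t a k))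
    by (intros; now apply bounded_continuous_expm).
  assert (Hd : forall t, is_derive (fun t => expm N A t a b) t
                           (sumR N (fun k => A k b * expm N A t a k))).
  { intros t. rewrite (sumR_ext N _ (fun k => expm N A t a k * A k b)) by (intros; ring).
    now apply is_derive_expm_r. }
  pose proof (laplace_derive w _ _ Hw (Hcol b Hb)
                (bounded_continuous_sumR N _ _ Hcol) Hd) as Hlap.
  rewrite laplace_sumR, expm_0 in Hlap by auto.
  rewrite Phat_laplace by auto.
  rewrite (sumC_ext N _ (fun k => RtoC (A k b) * laplace w (fun t => expm N A t a k))%C), Hlap.
  - ring.
  - intros k Hk. rewrite Phat_laplace by auto. ring.
Qed.

Lemma Phat_resolvent_l N A w a b : is_rate_matrix N A -> 0 < Re w ->
  (a < N)%nat -> (b < N)%nat ->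
  (w * Phat N A w a b - sumC N (fun k => RtoC (A a k) * Phat N A w k b))%C = RtoC (mid a b).
Proof.
  intros HA Hw Ha Hb.
  assert (Hrow : forall k, (k < N)%nat -> bounded_continuous (fun t => expm N A t k b))
    by (intros; now apply bounded_continuous_expm).
  pose proof (laplace_derive w _ _ Hw (Hrow a Ha) (bounded_continuous_sumR N _ _ Hrow)
                (fun t => is_derive_expm_l N A t a b Ha Hb)) as Hlap.
  rewrite laplace_sumR, expm_0 in Hlap by auto.
  rewrite Phat_laplace by auto.
  rewrite (sumC_ext N _ (fun k => RtoC (A a k) * laplace w (fun t => expm N A t k b))%C), Hlap.
  - ring.
  - intros k Hk. now rewrite Phat_laplace.
Qed.

(** * Perturbing one rate *)

Lemma second_resolvent_identity N (w : C) (Px Py : nat -> nat -> C) (Qx Qy : mat) a b :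
  (a < N)%nat -> (b < N)%nat ->
  (forall l, (l < N)%nat ->
     (w * Py a l - sumC N (fun k => Py a k * RtoC (Qy k l)))%C = RtoC (mid a l)) ->
  (forall k, (k < N)%nat ->
     (w * Px k b - sumC N (fun l => RtoC (Qx k l) * Px l b))%C = RtoC (mid k b)) ->
  (Py a b - Px a b)%C =
  sumC N (fun k => sumC N (fun l => Py a k * RtoC (Qy k l - Qx k l) * Px l b))%C.
Proof.
  intros Ha Hb Hy Hx.
  set (S := sumC N (fun k => Py a k * Px k b)%C).
  assert (Ey : sumC N (fun k => sumC N (fun l => Py a k * RtoC (Qy k l) * Px l b))%C =
               (w * S - Px a b)%C).
  { rewrite sumC_swap.
    rewrite (sumC_ext N _ (fun l => w * (Py a l * Px l b) - RtoC (mid a l) * Px l b)%C).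
    - now rewrite sumC_minus, sumC_scal_l, sumC_mid_l.
    - intros l Hl. rewrite <- (Hy l Hl).
      transitivity (sumC N (fun k => Py a k * RtoC (Qy k l)) * Px l b)%C; [|ring].
      rewrite <- sumC_scal_r. apply sumC_ext. intros; ring. }
  assert (Ex : sumC N (fun k => sumC N (fun l => Py a k * RtoC (Qx k l) * Px l b))%C =
               (w * S - Py a b)%C).
  { rewrite (sumC_ext N _ (fun k => w * (Py a k * Px k b) - Py a k * RtoC (mid k b))%C).
    - now rewrite sumC_minus, sumC_scal_l, sumC_mid_r.
    - intros k Hk. rewrite <- (Hx k Hk).
      transitivity (Py a k * sumC N (fun l => RtoC (Qx k l) * Px l b))%C; [|ring].
      rewrite <- sumC_scal_l. apply sumC_ext. intros; ring. }
  rewrite (sumC_ext N _ (fun k =>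
             sumC N (fun l => Py a k * RtoC (Qy k l) * Px l b) -
             sumC N (fun l => Py a k * RtoC (Qx k l) * Px l b))%C).
  - rewrite sumC_minus, Ey, Ex. ring.
  - intros k _. rewrite <- sumC_minus. apply sumC_ext. intros l _.
    rewrite RtoC_minus. ring.
Qed.

Lemma offdiag_col_sum_offrate N r0 i j x l : (i < N)%nat -> i <> j ->
  sumR N (fun c => if Nat.eqb c l then 0 else offrate r0 i j x c l) =
  sumR N (fun c => if Nat.eqb c l then 0 else r0 c l) + (x - r0 i j) * mid l j.
Proof.
  intros Hi Hij.
  rewrite (sumR_ext N _ (fun c => (if Nat.eqb c l then 0 else r0 c l) +
                                  (x - r0 i j) * mid l j * mid c i)).
  - now rewrite sumR_plus, sumR_mid_r.
  - intros c _. unfold offrate, mid.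
    destruct (Nat.eqb_spec c l), (Nat.eqb_spec c i), (Nat.eqb_spec l j); simpl;
      subst; try lia; ring.
Qed.

Lemma rate_matrix_offrate N r0 i j x y k l : (i < N)%nat -> i <> j ->
  rate_matrix N (offrate r0 i j y) k l - rate_matrix N (offrate r0 i j x) k l =
  (y - x) * ((mid k i - mid k j) * mid l j).
Proof.
  intros Hi Hij. unfold rate_matrix. rewrite !offdiag_col_sum_offrate by auto.
  unfold offrate, mid.
  destruct (Nat.eqb_spec k l), (Nat.eqb_spec k i), (Nat.eqb_spec k j), (Nat.eqb_spec l j);
    simpl; subst; try lia; ring.
Qed.

Lemma is_rate_matrix_offrate N r0 i j x :
  (forall a b, (a < N)%nat -> (b < N)%nat -> a <> b -> 0 <= r0 a b) -> 0 <= x ->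
  is_rate_matrix N (rate_matrix N (offrate r0 i j x)).
Proof.
  intros Hr Hx. split.
  - intros a b Ha Hb Hab. unfold rate_matrix, offrate.
    destruct (Nat.eqb_spec a b); [contradiction|].
    destruct (Nat.eqb a i && Nat.eqb b j); auto.
  - intros b Hb. unfold rate_matrix.
    set (S := sumR N (fun c => if Nat.eqb c b then 0 else offrate r0 i j x c b)).
    rewrite (sumR_ext N _ (fun a => (if Nat.eqb a b then 0 else offrate r0 i j x a b) +
                                    - S * mid a b)).
    + rewrite sumR_plus, (sumR_mid_r N b (fun _ => - S)) by auto. fold S. ring.
    + intros a _. unfold mid. destruct (Nat.eqb a b); ring.
Qed.

Section OneRate.

Variables (N : nat) (r0 : mat) (i j : nat) (w : C).
Hypotheses (Hi : (i < N)%nat) (Hj : (j < N)%nat) (Hij : i <> j)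
  (Hr0 : forall a b, (a < N)%nat -> (b < N)%nat -> a <> b -> 0 <= r0 a b)
  (Hw : 0 < Re w).

Let P (x : R) : nat -> nat -> C := Phat N (rate_matrix N (offrate r0 i j x)) w.

Lemma Phat_offrate x y a b : 0 <= x -> 0 <= y -> (a < N)%nat -> (b < N)%nat ->
  P y a b = (P x a b + RtoC (y - x) * (P y a i - P y a j) * P x j b)%C.
Proof.
  intros Hx Hy Ha Hb.
  pose proof (second_resolvent_identity N w (P x) (P y) _ _ a b Ha Hb
    (fun l Hl => Phat_resolvent_r N _ w a l (is_rate_matrix_offrate N r0 i j y Hr0 Hy) Hw Ha Hl)
    (fun k Hk => Phat_resolvent_l N _ w k b (is_rate_matrix_offrate N r0 i j x Hr0 Hx) Hw Hk Hb))
    as Hdiff.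
  rewrite (sumC_ext N _ (fun k => RtoC (y - x) * P x j b * (P y a k * RtoC (mid k i)) -
                                  RtoC (y - x) * P x j b * (P y a k * RtoC (mid k j)))%C)
    in Hdiff.
  - rewrite sumC_minus, !sumC_scal_l, !sumC_mid_r in Hdiff by auto.
    transitivity (P x a b + (P y a b - P x a b))%C; [ring|].
    rewrite Hdiff. ring.
  - intros k Hk.
    rewrite (sumC_ext N _ (fun l => P y a k * RtoC ((y - x) * (mid k i - mid k j)) *
                                    (RtoC (mid j l) * P x l b))%C).
    + rewrite sumC_scal_l, sumC_mid_l, !RtoC_mult, !RtoC_minus by auto. ring.
    + intros l Hl. rewrite rate_matrix_offrate, (mid_sym j l), !RtoC_mult by auto. ring.
Qed.

Lemma response_offrate (a : nat -> R) (b : mat) x y : 0 <= x -> 0 <= y ->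
  (response N r0 i j a b w y * (1 - RtoC (y - x) * (P x j i - P x j j)))%C =
  response N r0 i j a b w x.
Proof.
  intros Hx Hy. unfold response. rewrite <- sumC_scal_r. apply sumC_ext. intros l Hl.
  fold (P x) (P y).
  assert (Ei : P x l i = (P y l i - RtoC (y - x) * (P y l i - P y l j) * P x j i)%C)
    by (rewrite (Phat_offrate x y l i) at 1 by auto; ring).
  assert (Ej : P x l j = (P y l j - RtoC (y - x) * (P y l i - P y l j) * P x j j)%C)
    by (rewrite (Phat_offrate x y l j) at 1 by auto; ring).
  rewrite Ei, Ej. ring.
Qed.

Lemma chi_hat_offrate (a1 a2 : nat -> R) (b1 b2 : mat) x y : 0 <= x -> 0 <= y ->
  (1 - RtoC (y - x) * (P x j i - P x j j))%C <> RtoC 0 ->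
  response N r0 i j a2 b2 w x <> RtoC 0 ->
  chi_hat N r0 i j a1 a2 b1 b2 w y = chi_hat N r0 i j a1 a2 b1 b2 w x.
Proof.
  intros Hx Hy Hunit Hnz. unfold chi_hat.
  rewrite <- (response_offrate a1 b1 x y), <- (response_offrate a2 b2 x y) in * by auto.
  field. split; auto. intros H0. apply Hnz. rewrite H0. ring.
Qed.

End OneRate.

Lemma locally_nonneg_unit (x : R) (z : C) : 0 < x ->
  locally x (fun y => 0 <= y /\ (1 - RtoC (y - x) * z)%C <> RtoC 0).
Proof.
  intros Hx. pose proof (Rabs_pos (Re z)) as Hz.
  assert (Heps : 0 < Rmin x (/ (Rabs (Re z) + 1))).
  { apply Rmin_pos; auto. apply Rinv_0_lt_compat. lra. }
  exists (mkposreal _ Heps). intros y Hy.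
  change (Rabs (y - x) < Rmin x (/ (Rabs (Re z) + 1))) in Hy.
  pose proof (Rlt_le_trans _ _ _ Hy (Rmin_l _ _)) as Hyx.
  pose proof (Rlt_le_trans _ _ _ Hy (Rmin_r _ _)) as Hyz.
  split; [apply Rabs_def2 in Hyx; lra|].
  intros H0. apply (f_equal Re) in H0.
  assert (Hsmall : Rabs ((y - x) * Re z) < 1).
  { rewrite Rabs_mult.
    apply Rmult_lt_compat_r with (r := Rabs (Re z) + 1) in Hyz; [|lra].
    rewrite Rinv_l in Hyz by lra. pose proof (Rabs_pos (y - x)). nra. }
  apply Rabs_def2 in Hsmall. destruct z as [z1 z2].
  unfold Cminus, Cplus, Copp, Cmult, RtoC, Re in *. simpl in *. lra.
Qed.

Theorem theorem3 (N : nat) (r0 : mat) (i j : nat)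
  (a1 a2 : nat -> R) (b1 b2 : mat) (w : C) (x : R) :
  (i < N)%nat -> (j < N)%nat -> i <> j ->
  (forall a b, (a < N)%nat -> (b < N)%nat -> a <> b -> 0 <= r0 a b) ->
  0 < x ->
  irreducible N (rate_matrix N (offrate r0 i j x)) ->
  0 < Re w ->
  response N r0 i j a2 b2 w x <> RtoC 0 ->
  is_derive (fun y => chi_hat N r0 i j a1 a2 b1 b2 w y) x (RtoC 0).
Proof.
  intros Hi Hj Hij Hr0 Hx _ Hw Hnz.
  set (P := Phat N (rate_matrix N (offrate r0 i j x)) w).
  apply (is_derive_ext_loc (K := R_AbsRing) (V := C_R_NormedModule)
           (fun _ => chi_hat N r0 i j a1 a2 b1 b2 w x)).
  - eapply filter_imp; [|exact (locally_nonneg_unit x (P j i - P j j)%C Hx)].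
    intros y [Hy Hunit]. symmetry. apply chi_hat_offrate; auto. lra.
  - apply (is_derive_const (K := R_AbsRing) (V := C_R_NormedModule)).
Qed.
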